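(* Let $q$ be a power of a prime $p$ and let $X=\{F=0\}\subset\mathbb{P}^n$ be a Frobenius nonclassical hypersurface of degree $d$ over $\mathbb{F}_q$. If $d\leq q+1$ and $F$ is not a $p$-th power, then $X$ contains at least one $\mathbb{F}_q$-point.
   Context: $X$ is Frobenius nonclassical if $F$ divides $\sum_{i=0}^n x_i^q\frac{\partial F}{\partial x_i}$. ''$F$ is a $p$-th power'' means $F=G^p$ for some polynomial $G$. *)

From HB Require Import structures.
From mathcomp Require Import all_boot all_order all_algebra all_field.
From mathcomp Require Import mpoly.
Set Implicit Arguments. Unset Strict Implicit. Unset Printing Implicit Defensive.
Import GRing.Theory.
Local Open Scope ring_scope.

(* Homogeneous coordinates x_0, ..., x_n of P^n : polynomials in n.+1 variables. *)

Definition mpoly_dvd (n : nat) (K : comRingType) (F G : {mpoly K[n]}) : Prop :=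
  exists H : {mpoly K[n]}, G = F * H.

Definition frob_sum (n : nat) (K : comRingType) (q : nat) (F : {mpoly K[n]})
  : {mpoly K[n]} :=
  \sum_(i < n) 'X_i ^+ q * F^`M(i).

Definition frobenius_nonclassical (n : nat) (K : comRingType) (q : nat)
  (F : {mpoly K[n]}) : Prop :=
  mpoly_dvd F (frob_sum q F).

Definition is_pth_power (n : nat) (K : comRingType) (p : nat)
  (F : {mpoly K[n]}) : Prop :=
  exists G : {mpoly K[n]}, F = G ^+ p.

From HB Require Import structures.
From mathcomp Require Import all_boot all_order all_algebra all_field.
From mathcomp Require Import mpoly.
From mathcomp Require Import cyclic zify.
Set Implicit Arguments.
Unset Strict Implicit.
Unset Printing Implicit Defensive.
Import GRing.Theory.
Local Open Scope ring_scope.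

(* Write q = #|K| and suppose F has no zero in K^N other than the origin,
   with frob_sum q F = F * G.  Since x^q = x on K, Euler's identity makes
   frob_sum q F evaluate to d * F, so G - d vanishes at every nonzero point of
   K^N.  As G - d has degree < q and N >= 2, a character-sum argument (the sum
   of t^a over K is 0 unless q - 1 divides a > 0) shows G = d.  The two sides
   of frob_sum q F = d F are homogeneous of the different degrees q + d - 1
   and d, so d = 0 in K and frob_sum q F = 0; since q + 1 = 1 in K, d <= q.
   Then the monomials x_i^q m of frob_sum q F do not cancel, so every partial
   derivative of F vanishes, and over a finite field of characteristic p this
   makes F a p-th power. *)

Section Multinomials.
Variable N : nat.
Implicit Types (m e : 'X_{1..N}) (i j : 'I_N).

Lemma mnm_le_mdeg m i : (m i <= mdeg m)%N.
Proof. by rewrite mdegE (bigD1 i) //= leq_addr. Qed.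

Lemma mnm_addn_le_mdeg m i j : i != j -> (m i + m j <= mdeg m)%N.
Proof.
move=> ij; rewrite mdegE (bigD1 i) //= (bigD1 j) 1?eq_sym //=.
by rewrite addnA leq_addr.
Qed.

Lemma mnm_neq0P m : reflect (exists i, m i != 0%N) (m != 0%MM).
Proof.
apply: (iffP idP) => [m_nz|[i]]; last by apply: contraNneq => ->; rewrite mnm0E.
apply/existsP; apply: contraR m_nz => /existsPn m0.
by apply/eqP/mnmP => i; rewrite mnm0E; apply/eqP/negPn.
Qed.

Lemma eq_mnm_of_dvdn (r : nat) m e :
  e != 0%MM -> (mdeg m <= r)%N -> (mdeg e <= r)%N ->
  (forall i, (0 < m i + (r - e i))%N && (r %| m i + (r - e i))%N) -> m = e.
Proof.
move=> /mnm_neq0P[j e_j] le_mr le_er dvd_r.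
have coord i : m i = e i \/ m i = r /\ e i = 0%N.
  have /andP[pos /dvdnP[k eq_k]] := dvd_r i.
  have := mnm_le_mdeg m i; have := mnm_le_mdeg e i.
  by move: pos eq_k; case: k => [|[|[|k]]]; nia.
apply/mnmP => i; have [//|[m_i e_i]] := coord i.
have ij : i != j by apply: contraNneq e_j => <-; rewrite e_i.
have [m_j|[_ e_j0]] := coord j; last by rewrite e_j0 in e_j.
by have := mnm_addn_le_mdeg m ij; move: e_j; rewrite m_i m_j; lia.
Qed.

End Multinomials.

Section Derivatives.
Variables (N : nat) (R : comNzRingType).
Implicit Types (P F : {mpoly R[N]}) (m u : 'X_{1..N}).

Lemma mcoeffXM u P m :
  ('X_[u] * P)@_m = if (u <= m)%MM then P@_(m - u) else 0.
Proof.
rewrite mulrC; case: ifP => [le_um|lt_um].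
  by rewrite -{1}(submK le_um) addmC mcoeffMX.
apply: memN_msupp_eq0; rewrite (perm_mem (msuppMX P u)).
by apply: contraFN lt_um => /mapP[m' _ ->]; exact: lem_addr.
Qed.

Lemma mcoeff_mderiv_neq0 i P m :
  (P^`M(i))@_m != 0 -> (m + U_(i))%MM \in msupp P.
Proof.
rewrite mcoeff_mderiv mcoeff_msupp.
by apply: contraNneq => ->; rewrite mul0rn.
Qed.

Lemma msize_mderiv i P : (msize P^`M(i) <= (msize P).-1)%N.
Proof.
rewrite [msize _]msizeE; apply/bigmax_leqP_seq => m.
rewrite mcoeff_msupp => /mcoeff_mderiv_neq0/msize_mdeg_lt lt_m _; move: lt_m.
by have := mdegD m U_(i); rewrite mdeg1 /= => ->; lia.
Qed.

Lemma dhomog_mderiv i F d : F \is d.-homog -> F^`M(i) \is d.-1.-homog.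
Proof.
move=> /dhomogP homF; apply/dhomogP => m.
rewrite mcoeff_msupp => /mcoeff_mderiv_neq0/homF <-.
by have := mdegD m U_(i); rewrite mdeg1 addn1 => /= ->.
Qed.

Lemma mpoly_Euler F d :
  F \is d.-homog -> \sum_(i < N) 'X_i * F^`M(i) = d%:R *: F.
Proof.
move=> /dhomogP homF; apply/mpolyP => m; rewrite raddf_sum mcoeffZ /=.
transitivity (\sum_(i < N) F@_m *+ m i).
  apply: eq_bigr => i _; rewrite mcoeffXM lep1mP.
  have [->|m_i] := eqVneq (m i) 0%N; first by rewrite mulr0n.
  rewrite mcoeff_mderiv submK ?lep1mP // mnmBE mnm1E eqxx subn1 prednK //.
  by rewrite lt0n.
rewrite sumrMnr -mdegE.
have [->|Fm] := eqVneq F@_m 0; first by rewrite mul0rn mulr0.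
by rewrite homF ?mcoeff_msupp // mulr_natl.
Qed.

End Derivatives.

Section FrobeniusSum.
Variables (N : nat) (R : comNzRingType) (q : nat).
Implicit Types (F : {mpoly R[N]}).

Lemma dhomog_frob_sum F d :
  F \is d.-homog -> frob_sum q F \is (q + d.-1).-homog.
Proof.
move=> homF; apply: rpred_sum => i _; apply: dhomogM (dhomog_mderiv i homF).
by rewrite mpolyXn dhomogX /= mdegMn mdeg1 mul1n.
Qed.

Lemma frob_sum_eqZ_eq0 F d c : (1 < q)%N -> F \is d.-homog ->
  frob_sum q F = c *: F -> frob_sum q F = 0.
Proof.
move=> q_gt1 homF frobF; have [//|frob_nz] := eqVneq (frob_sum q F) 0.
move: (dhomogZ c homF); rewrite -frobF.
by move=> /(dhomog_uniq frob_nz (dhomog_frob_sum homF)); lia.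
Qed.

(* For j != i the monomial x_i^q m with deg m < q cannot be divisible by x_j^q,
   so it only occurs in the i-th summand of frob_sum q F. *)
Lemma frob_sum_eq0_mderiv F d i : (d <= q)%N -> (0 < q)%N -> F \is d.-homog ->
  frob_sum q F = 0 -> F^`M(i) = 0.
Proof.
move=> le_dq q_gt0 homF frob0; apply/mpolyP => m; rewrite mcoeff0.
have [//|Fim_nz] := eqVneq (F^`M(i))@_m 0.
have deg_m : mdeg m = d.-1.
  by apply: (dhomog_mf (dhomog_mderiv i homF)); rewrite mcoeff_msupp.
move/(congr1 (mcoeff (U_(i) *+ q + m)%MM)): frob0.
rewrite mcoeff0 raddf_sum (bigD1 i) //= big1 ?addr0 => [|j ji].
  by rewrite mpolyXn mcoeffXM lem_addr addmC addmK.
rewrite mpolyXn mcoeffXM; case: ifP => // /mnm_lepP/(_ j).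
rewrite mnmDE !mulmnE !mnm1E eqxx eq_sym (negbTE ji) mul0n mul1n add0n.
by have := mnm_le_mdeg m j; rewrite deg_m; lia.
Qed.

End FrobeniusSum.

Lemma msize_frob_sum (N : nat) (R : idomainType) (q : nat) (F : {mpoly R[N]}) :
  (msize (frob_sum q F) <= q + (msize F).-1)%N.
Proof.
apply: leq_trans (mmeasure_sum _ _ _ _) _; apply/bigmax_leqP_seq => i _ _.
have [->|Fi_nz] := eqVneq F^`M(i) 0; first by rewrite mulr0 msize0.
rewrite mpolyXn msizeM //; last first.
  apply/eqP => /(congr1 (mcoeff (U_(i) *+ q)%MM))/eqP.
  by rewrite mcoeffX eqxx mcoeff0 oner_eq0.
by rewrite msizeX mdegMn mdeg1 mul1n addSn /= leq_add2l msize_mderiv.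
Qed.

Lemma natr_card (R : finNzRingType) : #|R|%:R = 0 :> R.
Proof.
have : \sum_(t : R) t = \sum_(t : R) (t + 1) by rewrite (reindex_inj (addIr 1)).
by rewrite big_split sumr_const /= -[LHS]addr0 => /addrI.
Qed.

Lemma sum_meval_mul_prod (R : finComNzRingType) (N : nat) (P : {mpoly R[N]})
    (c : 'I_N -> nat) :
  \sum_(x : {ffun 'I_N -> R}) P.@[x] * \prod_i x i ^+ c i
  = \sum_(m <- msupp P) P@_m * \prod_i \sum_(t : R) t ^+ (m i + c i).
Proof.
under eq_bigr => x _ do rewrite mevalE mulr_suml.
rewrite exchange_big /=; apply: eq_bigr => m _.
rewrite (bigA_distr_bigA (fun i t => t ^+ (m i + c i))) mulr_sumr.
apply: eq_bigr => x _; rewrite -mulrA -big_split /=.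
by under eq_bigr do rewrite -exprD.
Qed.

Section FiniteField.
Variable K : finFieldType.
Local Notation q := #|K|.

Let q_gt1 : (1 < q)%N := finNzRing_gt1 K.
Let q1_gt0 : (0 < q.-1)%N. Proof. by rewrite -ltnS prednK // ltnW. Qed.

Lemma expf_card_pred (x : K) : x != 0 -> x ^+ q.-1 = 1.
Proof.
move=> x_nz; apply: (mulIf x_nz).
by rewrite mul1r -exprSr prednK ?expf_card // ltnW.
Qed.

Lemma finField_prim_root : exists z : K, (q.-1).-primitive_root z.
Proof.
pose units := enum [pred t : K | t != 0].
have /hasP[z _ zP] : has (q.-1).-primitive_root units; last by exists z.
apply: has_prim_root; rewrite ?enum_uniq //.
  by apply/allP => t; rewrite mem_enum unity_rootE => /expf_card_pred ->.
by rewrite -cardE -(cardC1 0); apply/eq_leq/eq_card => t; rewrite !inE.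
Qed.

Lemma sum_expr_finField a :
  \sum_(t : K) t ^+ a = if (0 < a)%N && (q.-1 %| a)%N then -1 else 0.
Proof.
have sum1 : \sum_(t : K) (1 : K) = 0 by rewrite sumr_const natr_card.
case: a => [|a] /=; first by rewrite -[RHS]sum1; apply: eq_bigr => t _.
rewrite (bigD1 0) //= expr0n add0r; case: ifPn => [dvd_q1a|ndvd_q1a].
  transitivity (\sum_(t : K | t != 0) (1 : K)).
    apply: eq_bigr => t t_nz; case/dvdnP: dvd_q1a => j ->.
    by rewrite mulnC exprM expf_card_pred ?expr1n.
  by move/eqP: sum1; rewrite (bigD1 0) //= addrC addr_eq0 => /eqP.
have [z zP] := finField_prim_root; rewrite (prim_order_dvd zP) in ndvd_q1a.
have z_nz : z != 0.
  apply/eqP => z0; have := prim_expr_order zP; rewrite z0 expr0n.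
  by rewrite eqn0Ngt (prim_order_gt0 zP) => /eqP; rewrite eq_sym oner_eq0.
set S := \sum_(t | t != 0) _; have S_eq : S = z ^+ a.+1 * S.
  rewrite /S mulr_sumr (reindex_inj (mulfI z_nz)) /=.
  by apply: eq_big => [t|t _]; rewrite ?mulf_eq0 ?(negbTE z_nz) ?exprMn.
have /eqP : (1 - z ^+ a.+1) * S = 0 by rewrite mulrBl mul1r -S_eq subrr.
by rewrite mulf_eq0 subr_eq0 eq_sym (negbTE ndvd_q1a) => /eqP.
Qed.

Section PuncturedVanishing.
Variables (N : nat) (H : {mpoly K[N]}).
Hypotheses (N_gt1 : (1 < N)%N) (size_H : (msize H <= q)%N).
Hypothesis H_vanish :
  forall x : 'I_N -> K, (exists i, x i != 0) -> H.@[x] = 0.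

Let mdeg_msupp_le m : m \in msupp H -> (mdeg m <= q.-1)%N.
Proof. by move/msize_mdeg_lt; lia. Qed.

(* Sum H(x) x^c over K^N with c = (q - 1) - e: the nonzero points contribute
   nothing, the origin nothing as some c_i > 0, and by the power-sum formula
   the only monomial of H surviving the sum is x^e, with weight (-1)^N. *)
Lemma mcoeff_vanish_nonzero e : e != 0%MM -> H@_e = 0.
Proof.
move=> e_nz; have [e_H|] := boolP (e \in msupp H); last exact: memN_msupp_eq0.
have deg_e := mdeg_msupp_le e_H.
pose c i := (q.-1 - e i)%N.
have [i0 c_i0] : exists i, (0 < c i)%N.
  have [i [j ij]] : exists i j : 'I_N, i != j.
    by exists (Ordinal (ltnW N_gt1)), (Ordinal N_gt1); rewrite -val_eqE.
  have := leq_trans (mnm_addn_le_mdeg e ij) deg_e; rewrite /c.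
  by case: (ltnP (e i) q.-1) => e_i le_ij; [exists i | exists j]; lia.
have : \sum_(x : {ffun 'I_N -> K}) H.@[x] * \prod_i x i ^+ c i = 0.
  apply: big1 => x _.
  have [/existsP[i x_i]|/existsPn x0] := boolP [exists i, x i != 0].
    by rewrite H_vanish ?mul0r //; exists i.
  rewrite (bigD1 i0) //= (eqP (negPn (x0 i0))) expr0n eqn0Ngt c_i0.
  by rewrite mul0r mulr0.
have prod_e : \prod_(i < N) \sum_(t : K) t ^+ (e i + c i) = (-1) ^+ N.
  rewrite -[N in RHS]card_ord -prodr_const; apply: eq_bigr => i _.
  rewrite sum_expr_finField subnKC ?dvdnn ?q1_gt0 //.
  exact: leq_trans (mnm_le_mdeg e i) deg_e.
rewrite (sum_meval_mul_prod H c) (bigD1_seq e e_H (msupp_uniq H)) /= prod_e.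
rewrite big1_seq ?addr0 => [/eqP|m /andP[m_e m_H]].
  by rewrite mulf_eq0 signr_eq0 orbF => /eqP.
have [/forallP pow_nz|/forallPn[i /negbTE pow_i]] :=
  boolP [forall i, (0 < m i + c i)%N && (q.-1 %| m i + c i)%N].
  by rewrite (eq_mnm_of_dvdn e_nz (mdeg_msupp_le m_H) deg_e pow_nz) eqxx in m_e.
by rewrite (bigD1 i) //= sum_expr_finField pow_i mul0r mulr0.
Qed.

Lemma mpoly_vanish_nonzero_eq0 : H = 0.
Proof.
have H_const : H = (H@_0)%:MP.
  apply/mpolyP => m; rewrite mcoeffC.
  have [->|m_nz] := eqVneq m 0%MM; first by rewrite mulr1.
  by rewrite mulr0 mcoeff_vanish_nonzero.
rewrite H_const -[H@_0](@mevalC N K (fun=> 1)) -H_const H_vanish ?raddf0 //.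
by exists (Ordinal (ltnW N_gt1)); rewrite oner_neq0.
Qed.

End PuncturedVanishing.

Lemma meval_frob_sum N (F : {mpoly K[N]}) d (x : 'I_N -> K) :
  F \is d.-homog -> (frob_sum q F).@[x] = d%:R * F.@[x].
Proof.
move=> homF; rewrite -mevalZ -(mpoly_Euler homF) /frob_sum !raddf_sum /=.
by apply: eq_bigr => i _; rewrite !mevalM rmorphXn /= mevalXU expf_card.
Qed.

Section NonclassicalCofactor.
Variables (N : nat) (F G : {mpoly K[N]}) (d : nat).
Hypotheses (N_gt1 : (1 < N)%N) (homF : F \is d.-homog).
Hypothesis frobF : frob_sum q F = F * G.
Hypothesis F_nonzero :
  forall x : 'I_N -> K, (exists i, x i != 0) -> F.@[x] != 0.

Let msize_cofactor : (msize G <= q)%N.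
Proof.
have [->|G_nz] := eqVneq G 0; first by rewrite msize0.
have F_nz : F != 0.
  apply: contraTneq (F_nonzero (x := fun=> 1) _) => [->|].
    by rewrite meval0 eqxx.
  by exists (Ordinal (ltnW N_gt1)); rewrite oner_neq0.
have F_pos : (0 < msize F)%N by rewrite lt0n mmeasure_poly_eq0.
have := msize_frob_sum q F; rewrite frobF msizeM // -(prednK F_pos).
by rewrite addSn /= addnC leq_add2r.
Qed.

Lemma frob_cofactor_eq : G = d%:R%:MP.
Proof.
apply/eqP; rewrite -subr_eq0; apply/eqP.
apply: mpoly_vanish_nonzero_eq0 => // [|x x_nz].
  apply: leq_trans (mmeasureD_le _ _ _) _.
  rewrite mmeasureN mmeasureC geq_max msize_cofactor.
  by rewrite (leq_trans (leq_b1 _)) // ltnW.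
have := meval_frob_sum x homF; rewrite frobF mevalM mulrC.
by move=> /(mulIf (F_nonzero x_nz)); rewrite mevalB mevalC => ->; rewrite subrr.
Qed.

End NonclassicalCofactor.

Lemma mderiv_eq0_pth_power (p N : nat) (F : {mpoly K[N]}) :
  p \in [pchar K] -> (forall i, F^`M(i) = 0) -> is_pth_power p F.
Proof.
move=> pK dF.
have pM : p \in [pchar {mpoly K[N]}].
  by rewrite inE (pcharf_prime pK) /= -mpolyC_nat (pcharf0 pK).
have dvd_supp m i : m \in msupp F -> (p %| m i)%N.
  rewrite mcoeff_msupp => Fm_nz.
  have [->|mi_nz] := eqVneq (m i) 0%N; first exact: dvdn0.
  move/(congr1 (mcoeff (m - U_(i))%MM)): (dF i).
  rewrite mcoeff_mderiv submK ?lep1mP // mcoeff0 mnmBE mnm1E eqxx subn1.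
  rewrite prednK ?lt0n // => /eqP.
  by rewrite -mulr_natr mulf_eq0 (negbTE Fm_nz) (dvdn_pcharf pK).
have pth_root (c : K) : (c ^+ (q %/ p)) ^+ p = c.
  by rewrite -exprM divnK ?expf_card // (dvdn_pcharf pK) natr_card.
exists (\sum_(m <- msupp F)
          F@_m ^+ (q %/ p) *: 'X_[[multinom (m i %/ p)%N | i < N]]).
rewrite -(pFrobenius_autE pM) rmorph_sum {1}(mpolyE F).
apply: eq_big_seq => m mF /=.
rewrite pFrobenius_autE exprZn mpolyXn pth_root; congr (_ *: 'X_[_]).
by apply/mnmP => i; rewrite mulmnE mnmE divnK ?dvd_supp.
Qed.

End FiniteField.

Lemma nonzero_root_or_nonvanishing (R : finComNzRingType) (N : nat)
    (F : {mpoly R[N]}) :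
  (exists x : 'I_N -> R, (exists i, x i != 0) /\ F.@[x] = 0) \/
  (forall x : 'I_N -> R, (exists i, x i != 0) -> F.@[x] != 0).
Proof.
have [/existsP[x /andP[/existsP[i x_i] /eqP Fx]]|/existsPn no_root] :=
  boolP [exists x : {ffun 'I_N -> R}, [exists i, x i != 0] && (F.@[x] == 0)].
  by left; exists x; split; first exists i.
right => x [i x_i]; have := no_root [ffun j => x j].
rewrite (meval_eq F (ffunE _)) negb_and => /orP[/existsPn/(_ i)|//].
by rewrite ffunE x_i.
Qed.

Theorem corollary2p4 (p k : nat) (K : finFieldType) (n d : nat)
  (F : {mpoly K[n.+1]}) :
  prime p -> (0 < k)%N -> #|K| = (p ^ k)%N ->
  (1 <= n)%N ->
  F \is d.-homog ->
  frobenius_nonclassical (p ^ k)%N F ->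
  (d <= (p ^ k).+1)%N ->
  ~ is_pth_power p F ->
  exists x : 'I_n.+1 -> K, (exists i, x i != 0) /\ F.@[x] = 0.
Proof.
move=> p_pr _ cardK n_gt0 homF [G frobFG] le_d_q1 not_pth.
rewrite -cardK in frobFG le_d_q1.
have pK : p \in [pchar K] := card_finPcharP cardK p_pr.
have q_gt1 := finNzRing_gt1 K.
have [//|F_nonzero] := nonzero_root_or_nonvanishing F; exfalso.
have F_nz : F != 0.
  apply: contra_not_neq not_pth => ->.
  by exists 0; rewrite expr0n gtn_eqF ?prime_gt0.
have frobF : frob_sum #|K| F = d%:R *: F.
  by rewrite frobFG (frob_cofactor_eq _ homF frobFG) // mulrC mul_mpolyC.
have frob0 := frob_sum_eqZ_eq0 q_gt1 homF frobF.
have d0 : d%:R = 0 :> K.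
  by apply/eqP; move/eqP: frob0; rewrite frobF scaler_eq0 (negbTE F_nz) orbF.
have le_dq : (d <= #|K|)%N.
  move: le_d_q1 d0; rewrite leq_eqVlt ltnS => /orP[/eqP->|//].
  by rewrite -addn1 natrD natr_card add0r => /eqP; rewrite oner_eq0.
apply: not_pth; apply: (mderiv_eq0_pth_power pK) => i.
exact: frob_sum_eq0_mderiv le_dq (ltnW q_gt1) homF frob0.
Qed.
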